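(* Let $m$ be a positive integer. Then \[ \sum_L\mathbf r_L=\bigl(1-\mathbf h_1+\mathbf h_m-\mathbf h_{m+1}+\mathbf h_{2m}-\cdots\bigr)^{-1}=\Bigl(\sum_{n\ge0}(\mathbf h_{mn}-\mathbf h_{mn+1})\Bigr)^{-1}, \] where the sum on the left is over all compositions $L$ (including the empty one) with all parts less than $m$.
   Context: In $F\langle\langle X_1,X_2,\dots\rangle\rangle$ ($F$ a field of characteristic $0$, noncommuting variables), $\mathbf h_n=\sum_{i_1\le\cdots\le i_n}X_{i_1}\cdots X_{i_n}$ ($\mathbf h_0=1$), and for a composition $L=(L_1,\dots,L_k)$ of $n$, $\mathbf r_L=\sum X_{i_1}\cdots X_{i_n}$ over $(i_1,\dots,i_n)$ weakly increasing within consecutive blocks of lengths $L_1,\dots,L_k$ and strictly decreasing between consecutive blocks ($i_{L_1+\cdots+L_j}>i_{L_1+\cdots+L_j+1}$); $\mathbf r_\emptyset=1$. *)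

From HB Require Import structures.
From mathcomp Require Import all_boot all_order all_algebra.
Set Implicit Arguments. Unset Strict Implicit. Unset Printing Implicit Defensive.
Import Order.TTheory GRing.Theory Num.Theory.
Local Open Scope ring_scope.

(* Formal power series in noncommuting variables X_1, X_2, ... over F.
   Variable X_(i+1) is encoded by the natural number i (order preserving),
   a monomial X_{i_1}...X_{i_n} by the word [:: i_1 - 1; ...; i_n - 1],
   and a series by its coefficient function on words. *)
Definition series (F : fieldType) := seq nat -> F.

Definition smul (F : fieldType) (f g : series F) : series F :=
  fun w => \sum_(i < (size w).+1) f (take i w) * g (drop i w).

Definition sone (F : fieldType) : series F := fun w => (w == [::])%:R.

Definition hser (F : fieldType) (n : nat) : series F :=
  fun w => ((size w == n) && sorted leq w)%:R.

(* r_L: words of length |L| that are weakly increasing inside the consecutive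
   blocks of lengths L_1, ..., L_k and strictly decreasing across consecutive
   blocks (last letter of a block > first letter of the next block). *)
Definition rser (F : fieldType) (L : seq nat) : series F :=
  fun w => let bs := reshape L w in
    [&& size w == sumn L, all (sorted leq) bs &
        sorted (fun b c => head 0%N c < last 0%N b)%N bs]%:R.

Fixpoint compsF (fuel n : nat) : seq (seq nat) :=
  match fuel with
  | 0 => if n == 0%N then [:: [::]] else [::]
  | f.+1 => if n == 0%N then [:: [::]] else
      flatten [seq [seq i.+1 :: L | L <- compsF f (n - i.+1)] | i <- iota 0 n]
  end.
Definition compositions (n : nat) : seq (seq nat) := compsF n n.

(* sum_L r_L over all compositions L (incl. the empty one) with all parts < m.
   Since r_L is homogeneous of degree |L|, the coefficient of w only gets
   contributions from compositions of size w. *)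
Definition sum_rL (F : fieldType) (m : nat) : series F :=
  fun w => \sum_(L <- compositions (size w) | all (fun p => p < m)%N L) rser F L w.

(* sum_{n >= 0} (h_{mn} - h_{mn+1}) for m >= 1: the n-th term has order
   >= n, so only n <= size w contribute to the coefficient of w. *)
Definition sum_hdiff (F : fieldType) (m : nat) : series F :=
  fun w => \sum_(n < (size w).+1) (hser F (m * n) w - hser F (m * n).+1 w).

From HB Require Import structures.
From mathcomp Require Import all_boot all_order all_algebra zify ring.
Import GRing.Theory.

Set Implicit Arguments.
Unset Strict Implicit.
Unset Printing Implicit Defensive.

(* Every word w is the concatenation of its maximal weakly increasing runs, and the
   sequence [runs w] of their lengths is the only composition L with r_L(w) = 1; so
   the coefficient of w in sum_L r_L is 1 if all runs of w are shorter than m, and 0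
   otherwise.  The coefficient of w in sum_n (h_{mn} - h_{mn+1}) vanishes unless w is
   weakly increasing, and is then [m | |w|] - [m | |w| - 1].  In either product, a
   factorization w = u v contributes only if its weakly increasing factor lies inside
   the last (resp. first) run of w, and along that run the contributions form a
   telescoping sum over a window of length m, which is 0. *)

Definition descent (u v : seq nat) : bool := (head 0 v < last 0 u)%N.

Definition descent_cut (u v : seq nat) : bool :=
  [|| u == [::], v == [::] | descent u v].

Lemma descent_take u v b : (0 < b)%N -> descent u (take b v) = descent u v.
Proof. by case: b v => [|b] [|x v]. Qed.

Lemma descent_cutE u v : u != [::] -> v != [::] -> descent_cut u v = descent u v.
Proof. by rewrite /descent_cut => /negbTE-> /negbTE->. Qed.

Lemma descent_cut_take u v i : descent_cut u v -> descent_cut u (take i v).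
Proof. by case: i v => [|i] [|x v] //; rewrite /descent_cut take0 orbT. Qed.

Lemma descent_cut_drop u v i : descent_cut u v -> descent_cut (drop i u) v.
Proof.
rewrite /descent_cut /descent => /or3P[/eqP->|->|lt_vu]; rewrite ?orbT //.
case: (ltnP i (size u)) => [iu|/drop_oversize->//].
rewrite -(cat_take_drop i u) last_cat in lt_vu.
have : (0 < size (drop i u))%N by rewrite size_drop subn_gt0.
by case: (drop i u) lt_vu => [|x d] //= ->; rewrite orbT.
Qed.

Lemma sorted_descent_cutF u v : u != [::] -> v != [::] -> descent_cut u v ->
  sorted leq (u ++ v) = false.
Proof.
case: u => [|x u] // _; case: v => [|y v] //= _.
rewrite /descent_cut /descent /= cat_path /= => lt_yx.
by rewrite leqNgt lt_yx !andbF.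
Qed.

Fixpoint runs (w : seq nat) : seq nat :=
  if w is x :: s then
    if s is y :: _ then
      if (x <= y)%N then (head 0 (runs s)).+1 :: behead (runs s) else 1 :: runs s
    else [:: 1]
  else [::].

Lemma runs_cons2 x y s : runs [:: x, y & s] =
  if (x <= y)%N then (head 0 (runs (y :: s))).+1 :: behead (runs (y :: s))
  else 1 :: runs (y :: s).
Proof. by []. Qed.

Lemma runs_eq0 w : (runs w == [::]) = (w == [::]).
Proof. by case: w => [|x [|y s]] //=; case: ifP. Qed.

Lemma runs_gt0 w : all (fun a => 0 < a)%N (runs w).
Proof.
elim: w => [|x [|y s] IH] //; rewrite runs_cons2; case: ifP => _ //.
by move: IH; case: (runs (y :: s)) => [|a l] //= /andP[_ ->].
Qed.

Lemma runs_sorted u : u != [::] -> sorted leq u -> runs u = [:: size u].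
Proof.
elim: u => [|x [|y s] IH] // _ /andP[le_xy /(IH isT) runs_ys].
by rewrite runs_cons2 le_xy runs_ys.
Qed.

Lemma runs_cat u v : descent_cut u v -> runs (u ++ v) = runs u ++ runs v.
Proof.
case: v => [|z v]; first by rewrite !cats0.
case: u => [|x u] // cut; have {cut} : (z < last x u)%N := cut.
elim: u x => [|y u IH] x lt_zx; first by rewrite /= leqNgt lt_zx.
rewrite !cat_cons runs_cons2 -cat_cons IH // runs_cons2.
by case: (runs (y :: u)) (runs_eq0 (y :: u)) => [|a l] //; case: ifP.
Qed.

Lemma first_run w : w != [::] -> exists u v,
  [/\ w = u ++ v, u != [::], sorted leq u & descent_cut u v].
Proof.
elim: w => [|x w IH] // _; case: w IH => [|y w] IH; first by exists [:: x], [::].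
have [[|z u] [v [e nonempty_u sorted_u cut]]] := IH isT; first by [].
move: e => [-> ->].
case: (leqP x z) => [le_xz|lt_zx].
  by exists [:: x, z & u], v; split; rewrite //= le_xz.
by exists [:: x], (z :: u ++ v); split; rewrite //= /descent_cut /descent /= lt_zx.
Qed.

Lemma last_run w : w != [::] -> exists p r,
  [/\ w = p ++ r, r != [::], sorted leq r & descent_cut p r].
Proof.
elim: w => [|x w IH] // _; case: w IH => [|y w] IH; first by exists [::], [:: x].
have [[|z p] [r [e nonempty_r sorted_r cut]]] := IH isT; last first.
  by exists [:: x, z & p], r; split; rewrite //= e.
rewrite /= in e; subst r; case: (leqP x y) => [le_xy|lt_yx].
  by exists [::], [:: x, y & w]; split; rewrite //= le_xy.
by exists [:: x], (y :: w); split; rewrite //= /descent_cut /descent /= lt_yx.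
Qed.

Definition ribbon_word (L w : seq nat) : bool :=
  [&& size w == sumn L, all (sorted leq) (reshape L w) & sorted descent (reshape L w)].

Lemma ribbon_word_runs w : ribbon_word (runs w) w.
Proof.
elim: {w}(size w) {-2}w (leqnn (size w)) => [|n IH] w; first by rewrite leqn0 => /nilP->.
have [->//|nonempty_w size_w] := eqVneq w [::].
have [u [v [w_eq nonempty_u sorted_u cut]]] := first_run nonempty_w; subst w.
have /and3P[/eqP size_v sorted_runs_v descent_runs_v] : ribbon_word (runs v) v.
  apply: IH; rewrite -ltnS (leq_trans _ size_w) // size_cat -add1n leq_add2r.
  by rewrite lt0n size_eq0.
rewrite runs_cat // runs_sorted // /ribbon_word /= take_size_cat // drop_size_cat //.
rewrite size_cat size_v eqxx sorted_u sorted_runs_v /=.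
case: (runs v) (runs_gt0 v) (runs_eq0 v) descent_runs_v => [|b l] //= /andP[b_gt0 _].
move=> /esym/negbT nonempty_v ->; rewrite andbT descent_take // -descent_cutE //.
Qed.

Lemma sumn_runs w : sumn (runs w) = size w.
Proof. by have /and3P[/eqP-> _ _] := ribbon_word_runs w. Qed.

Lemma runs_ribbon_word L w : all (fun a => 0 < a)%N L -> ribbon_word L w -> L = runs w.
Proof.
elim: L w => [|a L IH] w /=; first by rewrite /ribbon_word => _ /andP[/eqP/size0nil->].
move=> /andP[a_gt0 pos_L] /and3P[/eqP size_w /= /andP[sorted_take sorted_L] desc].
have size_take : size (take a w) = a by rewrite size_takel // size_w leq_addr.
have ribbon_drop : ribbon_word L (drop a w).
  by rewrite /ribbon_word size_drop size_w addKn eqxx sorted_L (path_sorted desc).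
rewrite (IH _ pos_L ribbon_drop) -{2}(cat_take_drop a w) runs_cat.
  have nonempty_take : take a w != [::] by rewrite -size_eq0 size_take -lt0n.
  by rewrite (@runs_sorted (take a w)) // size_take.
case: L pos_L ribbon_drop desc {IH sorted_L size_w} => [|b L] /=.
  by move=> _ /and3P[/eqP/size0nil-> _ _]; rewrite /descent_cut orbT.
by move=> /andP[b_gt0 _] _ /andP[]; rewrite descent_take // /descent_cut => ->; rewrite !orbT.
Qed.

Lemma sumn_indicator (s : seq nat) j (X : nat -> nat) : uniq s ->
  sumn [seq (i == j) * X i | i <- s] = (j \in s) * X j.
Proof.
elim: s => [|i s IH] //= /andP[i_notin_s uniq_s]; rewrite IH // in_cons.
by case: eqVneq => [<-|_] //=; rewrite (negbTE i_notin_s) mul0n addn0.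
Qed.

Lemma count_mem_map_cons (x : nat) s L : count_mem L [seq x :: l | l <- s] =
  if L is y :: L' then (x == y) * count_mem L' s else 0.
Proof.
rewrite count_map; case: L => [|y L]; first by rewrite (@eq_count _ _ pred0) ?count_pred0.
case: eqVneq => [<-|ne_xy]; last by rewrite (@eq_count _ _ pred0) ?count_pred0 // => l;
  rewrite /= eqseq_cons (negbTE ne_xy).
by rewrite mul1n; apply: eq_count => l; rewrite /= eqseq_cons eqxx.
Qed.

Lemma count_compsF f n L : n <= f ->
  count_mem L (compsF f n) = all (fun a => 0 < a) L && (sumn L == n).
Proof.
have count_nil L' : count_mem L' [:: [::]] = all (fun a => 0 < a) L' && (sumn L' == 0).
  by case: L' => [|[|a] L'] //=; rewrite addSn andbF.
elim: f n L => [|f IH] n L le_nf.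
  by move: le_nf; rewrite leqn0 => /eqP->; apply: count_nil.
rewrite /=; have [->|n_neq0] := eqVneq n 0; first exact: count_nil.
rewrite count_flatten -map_comp.
have sumn_map0 (X : nat -> nat) : (forall i, X i = 0) -> sumn [seq X i | i <- iota 0 n] = 0.
  by move=> X0; elim: (iota 0 n) => //= i s ->; rewrite X0.
case: L => [|[|j] L].
- by rewrite sumn_map0 => [|i]; rewrite /= ?count_mem_map_cons // eq_sym (negbTE n_neq0).
- by rewrite sumn_map0 => [|i]; rewrite /= ?count_mem_map_cons.
rewrite (eq_map (g := fun i => (i == j) * (all (fun a => 0 < a) L && (sumn L == n - j.+1)))).
  rewrite sumn_indicator ?iota_uniq // mem_iota /=.
  case: ltnP => [lt_jn|le_nj]; first by rewrite mul1n; congr (_ && _); apply/eqP/eqP; lia.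
  by rewrite mul0n (_ : (_ == n) = false) ?andbF //; apply/negbTE/eqP; lia.
move=> i /=; rewrite count_mem_map_cons eqSS.
by case: eqVneq => [->|_]; rewrite ?mul0n // IH //; lia.
Qed.

Definition short_runs (m : nat) (w : seq nat) : bool := all (fun a => a < m) (runs w).

Lemma short_runs_cat_run m p s : 0 < m -> sorted leq s -> descent_cut p s ->
  short_runs m (p ++ s) = short_runs m p && (size s < m).
Proof.
move=> m_gt0 sorted_s cut; have [->|nonempty_s] := eqVneq s [::].
  by rewrite cats0 m_gt0 andbT.
by rewrite /short_runs runs_cat // (@runs_sorted s) // all_cat /= andbT.
Qed.

Lemma short_runs_run_cat m s v : 0 < m -> sorted leq s -> descent_cut s v ->
  short_runs m (s ++ v) = (size s < m) && short_runs m v.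
Proof.
move=> m_gt0 sorted_s cut; have [->|nonempty_s] := eqVneq s [::]; first by rewrite m_gt0.
by rewrite /short_runs runs_cat // runs_sorted.
Qed.

Local Open Scope ring_scope.

Lemma rserE (F : fieldType) L w : rser F L w = (ribbon_word L w)%:R.
Proof. by []. Qed.

Lemma sum_rLE (F : fieldType) m w : sum_rL F m w = (short_runs m w)%:R.
Proof.
rewrite /sum_rL big_seq_cond (eq_bigr (fun L => (L == runs w)%:R : F)).
  rewrite -big_seq_cond.
  transitivity (\sum_(L <- compositions (size w) | L == runs w) (short_runs m w)%:R : F).
    rewrite big_mkcond [RHS]big_mkcond; apply: eq_bigr => L _.
    by case: eqVneq => [->|_]; rewrite /short_runs; case: (all _ _).
  by rewrite big_const_seq /= count_compsF // runs_gt0 sumn_runs eqxx /= addr0.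
move=> L /andP[L_in _]; have /andP[pos_L _] : all (fun a => 0 < a)%N L && (sumn L == size w).
  by move: L_in; rewrite -has_pred1 has_count count_compsF // lt0b.
rewrite rserE; congr ((nat_of_bool _)%:R).
by apply/idP/eqP => [|->]; [apply: runs_ribbon_word | apply: ribbon_word_runs].
Qed.

Section HDifference.

Variables (F : fieldType) (m : nat).
Hypothesis m_gt0 : (0 < m)%N.

(* [hdiff_coef t = [m | t] - [m | t - 1]] is the coefficient in [sum_hdiff] of a weakly
   increasing word of length t; as a difference of consecutive values of
   [ind_dvd_pred], its sums over windows telescope. *)
Definition ind_dvd_pred (t : nat) : F := ((0 < t) && (m %| t.-1))%N%:R.

Definition hdiff_coef (t : nat) : F := ind_dvd_pred t.+1 - ind_dvd_pred t.

Lemma sum_ord_eq_mul t K : (t < K)%N ->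
  \sum_(n < K) ((t == m * n)%N%:R : F) = (m %| t)%N%:R.
Proof.
move=> lt_tK; have [/dvdnP[q t_eq]|not_dvd] := boolP (m %| t)%N; last first.
  by rewrite big1 // => n _; case: eqP => // eq_t; rewrite eq_t dvdn_mulr in not_dvd.
subst t; have lt_qK : (q < K)%N by apply: leq_ltn_trans lt_tK; rewrite leq_pmulr.
rewrite (bigD1 (Ordinal lt_qK)) //= mulnC eqxx big1 ?addr0 // => n ne_nq.
by rewrite eqn_pmul2l //; case: eqP => // eq_qn; case/eqP: ne_nq; apply: val_inj.
Qed.

Lemma sum_hdiffE w : sum_hdiff F m w = (sorted leq w)%:R * hdiff_coef (size w).
Proof.
rewrite /sum_hdiff /hser sumrB /hdiff_coef /ind_dvd_pred mulrBr; congr (_ - _).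
  rewrite -(@sum_ord_eq_mul _ (size w).+1) // mulr_sumr.
  by apply: eq_bigr => n _; rewrite -natrM mulnb andbC.
case: (size w) => [|s]; first by rewrite mulr0 big1.
rewrite /= -(@sum_ord_eq_mul _ s.+2) // mulr_sumr.
by apply: eq_bigr => n _; rewrite -natrM mulnb andbC eqSS.
Qed.

Lemma sum_window_hdiff_coef k : (0 < k)%N ->
  \sum_(i < k.+1) (k - i < m)%N%:R * hdiff_coef i = 0.
Proof.
move=> k_gt0; rewrite -(big_mkord xpredT (fun i => (k - i < m)%N%:R * hdiff_coef i)).
rewrite (big_cat_nat (n := k.+1 - m)) ?leq_subr //= big_nat big1 ?add0r; last first.
  by move=> i /andP[_ lt_i]; rewrite (_ : (k - i < m)%N = false) ?mul0r //; lia.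
rewrite (eq_big_nat _ _ (F2 := hdiff_coef)) => [|i /andP[le_i _]]; last first.
  by rewrite (_ : (k - i < m)%N) ?mul1r //; lia.
rewrite telescope_sumr ?leq_subr // /ind_dvd_pred /=.
case: (leqP m k) => [le_mk|lt_km].
  by rewrite subSn // /= dvdn_subl // subrr.
rewrite (_ : k.+1 - m = 0)%N; last by lia.
rewrite (_ : (m %| k)%N = false) /= ?subrr //.
by apply/negP => /(dvdn_leq k_gt0); rewrite leqNgt lt_km.
Qed.

End HDifference.

Section CauchyProductSplit.

Variables (F : fieldType) (f g : series F).

Lemma smul_nil : smul f g [::] = f [::] * g [::].
Proof. by rewrite /smul big_ord1. Qed.

Lemma smul_cat_suffix p r : (forall i, (i < size p)%N -> g (drop i p ++ r) = 0) ->
  smul f g (p ++ r) = \sum_(j < (size r).+1) f (p ++ take j r) * g (drop j r).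
Proof.
move=> g_drop0; rewrite /smul size_cat -addnS big_split_ord /=.
rewrite big1 => [|i _]; last by rewrite drop_cat ltn_ord g_drop0 ?mulr0.
by rewrite add0r; apply: eq_bigr => j _; rewrite take_cat drop_cat ltnNge leq_addr /= addKn.
Qed.

Lemma smul_cat_prefix u v : (forall i, (0 < i <= size v)%N -> f (u ++ take i v) = 0) ->
  smul f g (u ++ v) = \sum_(j < (size u).+1) f (take j u) * g (drop j u ++ v).
Proof.
move=> f_take0; rewrite /smul size_cat -addSn big_split_ord /=.
rewrite [X in _ + X]big1 => [|i _]; last first.
  rewrite take_cat ltnNge leqW ?leq_addr //= addSn -addnS addKn f_take0 ?mul0r //.
  by rewrite ltn_ord.
rewrite addr0; apply: eq_bigr => j _; have le_ju : (j <= size u)%N by rewrite -ltnS.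
rewrite takel_cat // drop_cat; case: ltnP => // le_uj.
have -> : j = size u :> nat by apply/eqP; rewrite eqn_leq le_uj le_ju.
by rewrite subnn drop0 drop_size.
Qed.

End CauchyProductSplit.

Section Inverse.

Variables (F : fieldType) (m : nat).
Hypothesis m_gt0 : (0 < m)%N.

Lemma sum_rL_nil : sum_rL F m [::] = 1.
Proof. by rewrite sum_rLE. Qed.

Lemma sum_hdiff_nil : sum_hdiff F m [::] = 1.
Proof. by rewrite sum_hdiffE // /hdiff_coef /ind_dvd_pred /= dvdn0 subr0 mul1r. Qed.

Lemma sum_rL_hdiff_cancel w : w != [::] -> smul (sum_rL F m) (sum_hdiff F m) w = 0.
Proof.
move=> nonempty_w; have [p [r [-> nonempty_r sorted_r cut]]] := last_run nonempty_w.
rewrite smul_cat_suffix => [|i lt_ip]; last first.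
  rewrite sum_hdiffE // sorted_descent_cutF ?mul0r ?descent_cut_drop //.
  by rewrite -size_eq0 size_drop subn_eq0 -ltnNge.
transitivity ((short_runs m p)%:R *
  \sum_(j < (size r).+1) (j < m)%N%:R * hdiff_coef F m (size r - j)).
  rewrite mulr_sumr; apply: eq_bigr => j _; have le_jr : (j <= size r)%N by rewrite -ltnS.
  rewrite sum_rLE sum_hdiffE // short_runs_cat_run ?take_sorted ?descent_cut_take //.
  by rewrite drop_sorted // size_drop size_takel // -mulnb natrM mul1r mulrA.
rewrite (reindex_inj rev_ord_inj) /=.
rewrite (eq_bigr (fun j : 'I__ => (size r - j < m)%N%:R * hdiff_coef F m j)) => [|j _].
  by rewrite sum_window_hdiff_coef ?mulr0 // lt0n size_eq0.
by rewrite subSS subKn // -ltnS.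
Qed.

Lemma sum_hdiff_rL_cancel w : w != [::] -> smul (sum_hdiff F m) (sum_rL F m) w = 0.
Proof.
move=> nonempty_w; have [u [v [-> nonempty_u sorted_u cut]]] := first_run nonempty_w.
rewrite smul_cat_prefix => [|i /andP[i_gt0 le_iv]]; last first.
  rewrite sum_hdiffE // sorted_descent_cutF ?mul0r ?descent_cut_take //.
  by rewrite -size_eq0 size_takel // -lt0n.
transitivity ((short_runs m v)%:R *
  \sum_(j < (size u).+1) (size u - j < m)%N%:R * hdiff_coef F m j).
  rewrite mulr_sumr; apply: eq_bigr => j _; have le_ju : (j <= size u)%N by rewrite -ltnS.
  rewrite sum_rLE sum_hdiffE // short_runs_run_cat ?drop_sorted ?descent_cut_drop //.
  by rewrite take_sorted // size_drop size_takel // -mulnb natrM mul1r; ring.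
by rewrite sum_window_hdiff_coef ?mulr0 // lt0n size_eq0.
Qed.

End Inverse.

Theorem corollary12 (F : fieldType) (hF : [pchar F] =i pred0) (m : nat) (hm : (0 < m)%N) :
  (forall w, smul (sum_rL F m) (sum_hdiff F m) w = sone F w) /\
  (forall w, smul (sum_hdiff F m) (sum_rL F m) w = sone F w).
Proof.
split=> w; rewrite /sone; have [->|nonempty_w] := eqVneq w [::].
- by rewrite smul_nil sum_rL_nil sum_hdiff_nil ?mulr1.
- by rewrite sum_rL_hdiff_cancel.
- by rewrite smul_nil sum_rL_nil sum_hdiff_nil ?mulr1.
- by rewrite sum_hdiff_rL_cancel.
Qed.
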